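(* Let $\mathcal{A}$ be a finite list of elements of $\Gamma=\mathbb{Z}^\ell$ and let $k$ be a positive divisor of $\rho_{\mathcal{A}}$. Then the $k$-constituent of the characteristic quasi-polynomial of $\mathcal{A}$, i.e. the polynomial $f_k(t)$ such that $f_k(q)=\#\mathcal{M}(\mathcal{A};\mathbb{Z}^\ell,\mathbb{Z}/q\mathbb{Z})$ for every positive integer $q\equiv k\pmod{\rho_{\mathcal{A}}}$, satisfies $$f_k(t)=\chi^{\mathbb{Z}/k\mathbb{Z}}_{\mathcal{A}}(t).$$
   Context: $\mathcal{M}(\mathcal{A};\mathbb{Z}^\ell,G)=\mathrm{Hom}(\mathbb{Z}^\ell,G)\smallsetminus\bigcup_{\alpha\in\mathcal{A}}\{\varphi\mid\varphi(\alpha)=0\}\cong\{x\in G^\ell\mid \alpha(x)\ne0\ \forall\alpha\in\mathcal{A}\}$. For a sublist $\mathcal{S}$ (sublists distinguished by index), write $(\mathbb{Z}^\ell/\langle\mathcal{S}\rangle)_{\mathrm{tor}}\simeq\bigoplus_i\mathbb{Z}/d_{\mathcal{S},i}\mathbb{Z}$ with $d_{\mathcal{S},i}\mid d_{\mathcal{S},i+1}$; $\rho_{\mathcal{A}}$ is the lcm of the largest such $d_{\mathcal{S},i}$ over all $\mathcal{S}\subset\mathcal{A}$. It is known (Kamiya–Takemura–Terao) that $q\mapsto\#\mathcal{M}(\mathcal{A};\mathbb{Z}^\ell,\mathbb{Z}/q\mathbb{Z})$ is a quasi-polynomial with period $\rho_{\mathcal{A}}$, so the polynomials $f_k$ exist.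 $r_{\mathcal{S}}$ is the rank of $\langle\mathcal{S}\rangle$, $m(\mathcal{S};G)=\#\mathrm{Hom}((\mathbb{Z}^\ell/\langle\mathcal{S}\rangle)_{\mathrm{tor}},G)$ and $\chi^G_{\mathcal{A}}(t)=\sum_{\mathcal{S}\subset\mathcal{A}}(-1)^{\#\mathcal{S}}m(\mathcal{S};G)t^{\ell-r_{\mathcal{S}}}$. *)

From HB Require Import structures.
From mathcomp Require Import all_boot all_order all_algebra.
Set Implicit Arguments. Unset Strict Implicit. Unset Printing Implicit Defensive.
Import Order.TTheory GRing.Theory Num.Theory.

Local Open Scope ring_scope.

(* An element alpha of Gamma = Z^l is a row vector 'rV[int]_l; the list A is a
   seq of such vectors; sublists S are subsets of the index set 'I_(size A). *)

(* #M(A; Z^l, Z/qZ): Hom(Z^l, Z/qZ) = (Z/qZ)^l, with Z/qZ represented by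
   {0,...,q-1} = 'I_q; alpha(x) = sum_i alpha_i x_i must be nonzero mod q. *)
Definition Mcount (l : nat) (A : seq 'rV[int]_l) (q : nat) : nat :=
  #|[set x : {ffun 'I_l -> 'I_q} |
      all (fun a : 'rV[int]_l => ~~ (q%:Z %| \sum_(i < l) a 0 i * (x i : nat)%:Z)%Z) A]|.

(* The matrix whose rows are the elements of the sublist S (other rows zero;
   zero rows do not change the generated subgroup <S>). *)
Definition subA (l : nat) (A : seq 'rV[int]_l) (S : {set 'I_(size A)}) :
  'M[int]_(size A, l) :=
  \matrix_(i, j) (if i \in S then (nth 0 A i) 0 j else 0).
Arguments subA {l} A S.

Definition smith_diag m n (M : 'M[int]_(m, n)) : seq int :=
  match int_Smith_normal_form M with
  | existT2 _ _ (existT2 _ _ (exist2 d _ _)) => d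
  end.

(* Torsion invariants d_{S,1} | d_{S,2} | ... of (Z^l / <S>)_tor:
   the nonzero invariant factors (in absolute value) of the matrix of S. *)
Definition tor_inv (l : nat) (A : seq 'rV[int]_l) (S : {set 'I_(size A)}) : seq nat :=
  [seq `|x|%N | x <- take (minn (size A) l) (smith_diag (subA A S)) & x != 0].
Arguments tor_inv {l} A S.

Definition rankS (l : nat) (A : seq 'rV[int]_l) (S : {set 'I_(size A)}) : nat :=
  \rank (map_mx (intr : int -> rat) (subA A S)).
Arguments rankS {l} A S.

Definition rhoA (l : nat) (A : seq 'rV[int]_l) : nat :=
  \big[lcmn/1%N]_(S : {set 'I_(size A)}) last 1%N (tor_inv A S).

(* m(S; Z/kZ) = #Hom((Z^l/<S>)_tor, Z/kZ) with (Z^l/<S>)_tor = (+)_i Z/d_i: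
   a homomorphism is a choice of images y_i in Z/kZ with d_i y_i = 0. *)
Definition mS (l : nat) (A : seq 'rV[int]_l) (S : {set 'I_(size A)}) (k : nat) : nat :=
  let d := tor_inv A S in
  #|[set y : {ffun 'I_(size d) -> 'I_k} |
      [forall i : 'I_(size d), (k %| nth 0 d i * y i)%N]]|.
Arguments mS {l} A S k.

Definition chiA (l : nat) (A : seq 'rV[int]_l) (k : nat) : {poly int} :=
  \sum_(S : {set 'I_(size A)})
     ((-1) ^+ #|S| * (mS A S k)%:R) *: 'X^(l - rankS A S).

From HB Require Import structures.
From mathcomp Require Import all_boot all_order all_algebra.
Set Implicit Arguments. Unset Strict Implicit. Unset Printing Implicit Defensive.
Import Order.TTheory GRing.Theory Num.Theory.

(* Inclusion-exclusion writes #M(A; Z^l, Z/qZ) as the signed sum over sublists S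
   of the number of x in (Z/qZ)^l killed by every element of S.  Bringing the
   matrix of S to Smith normal form L D R, that number is
   q^(l - r_S) * prod_i gcd(d_{S,i}, q), and since every d_{S,i} divides rho_A,
   gcd(d_{S,i}, q) = gcd(d_{S,i}, k) = #Hom(Z/d_{S,i}, Z/kZ) whenever
   q = k mod rho_A.  So chi^{Z/kZ}_A(q) counts M for all such q, and it is the
   only polynomial doing so since there are infinitely many of them. *)

Lemma card_ord_dvdn (q c : nat) : (0 < q)%N -> (c %| q)%N ->
  #|[pred t : 'I_q | (c %| t)%N]| = (q %/ c)%N.
Proof.
case: q => // q _ cq.
rewrite -sum1_card big_mkcond /= -(big_mkord predT (fun t => (c %| t : nat)%N)).
rewrite divn_count_dvd (big_nat_recl _ _ _ (leq0n q)) dvdn0 big_nat_recr //= cq.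
by rewrite big_add1 addnC.
Qed.

Lemma card_ord_dvdn_mul (q e : nat) : (0 < q)%N ->
  #|[pred t : 'I_q | (q %| e * t)%N]| = gcdn e q.
Proof.
move=> q_gt0; set g := gcdn e q.
have g_gt0 : (0 < g)%N by rewrite gcdn_gt0 q_gt0 orbT.
have eE : e = (e %/ g * g)%N by rewrite divnK // dvdn_gcdl.
have qE : q = (q %/ g * g)%N by rewrite divnK // dvdn_gcdr.
have co_qe : coprime (q %/ g) (e %/ g).
  by rewrite coprime_sym /coprime -(@eqn_pmul2r g) // muln_gcdl -eE -qE mul1n.
transitivity #|[pred t : 'I_q | (q %/ g %| t)%N]|.
  apply: eq_card => t; rewrite !inE {1}qE {1}eE mulnAC dvdn_pmul2r //.
  by rewrite Gauss_dvdr.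
by rewrite card_ord_dvdn ?dvdn_div ?dvdn_gcdr // divnA ?dvdn_gcdr // mulKn.
Qed.

Lemma card_ffun_forall (n : nat) (T : finType) (P : 'I_n -> pred T) :
  #|[set f : {ffun 'I_n -> T} | [forall i, P i (f i)]]| = (\prod_(i < n) #|P i|)%N.
Proof.
have := card_family P; rewrite foldrE big_map big_enum /= => <-.
by apply: eq_card => f; rewrite inE; apply/forallP/familyP.
Qed.

Local Open Scope ring_scope.

Section IntegerColumnsModQ.

Variable q : nat.

Definition dvdz_col n (v : 'cV[int]_n) := [forall i, (q%:Z %| v i ord0)%Z].

Lemma dvdz_colD n (a b : 'cV[int]_n) :
  dvdz_col a -> dvdz_col b -> dvdz_col (a + b).
Proof. by move=> /forallP Ha /forallP Hb; apply/forallP => i; rewrite mxE rpredD. Qed.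

Lemma dvdz_colN n (a : 'cV[int]_n) : dvdz_col (- a) = dvdz_col a.
Proof. by apply: eq_forallb => i; rewrite mxE rpredN. Qed.

Lemma dvdz_col_congr n (a b : 'cV[int]_n) : dvdz_col (a - b) -> dvdz_col a = dvdz_col b.
Proof.
move=> /forallP Hab; apply: eq_forallb => i.
have := Hab i; rewrite !mxE => Habi.
by rewrite -[a i ord0](subrK (b i ord0)) rpredDl.
Qed.

Lemma dvdz_col_mul m n (P : 'M[int]_(m, n)) v : dvdz_col v -> dvdz_col (P *m v).
Proof.
move=> /forallP Hv; apply/forallP => i; rewrite mxE.
by apply: rpred_sum => j _; rewrite dvdz_mull.
Qed.

Lemma dvdz_col_unitmx n (P : 'M[int]_n) v :
  P \in unitmx -> dvdz_col (P *m v) = dvdz_col v.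
Proof.
move=> uP; apply/idP/idP; last exact: dvdz_col_mul.
by move=> /(dvdz_col_mul (invmx P)); rewrite mulKmx.
Qed.

Definition col_of_ffun n (x : {ffun 'I_n -> 'I_q}) : 'cV[int]_n := \col_j (x j : nat)%:Z.

Lemma col_of_ffun_inj n (x y : {ffun 'I_n -> 'I_q}) :
  dvdz_col (col_of_ffun x - col_of_ffun y) -> x = y.
Proof.
move=> /forallP Hxy; apply/ffunP => j; apply: val_inj => /=.
have := Hxy j; rewrite !mxE -eqz_mod_dvd !modz_nat => /eqP [].
by rewrite !modn_small.
Qed.

End IntegerColumnsModQ.

Definition ffun_of_col q n (v : 'cV[int]_n) : {ffun 'I_n -> 'I_q.+1} :=
  [ffun j => inord `|(v j ord0 %% q.+1%:Z)%Z|%N].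

Lemma col_of_ffunK q n (v : 'cV[int]_n) :
  dvdz_col q.+1 (col_of_ffun (ffun_of_col q v) - v).
Proof.
apply/forallP => i; rewrite !mxE ffunE.
have mod_ge0 : 0 <= (v i ord0 %% q.+1%:Z)%Z by rewrite modz_ge0.
have mod_lt : (`|(v i ord0 %% q.+1%:Z)%Z| < q.+1)%N.
  by rewrite -ltz_nat abszE ger0_norm // ltz_pmod.
rewrite inordK // abszE ger0_norm // {2}(divz_eq (v i ord0) q.+1%:Z).
by rewrite opprD addrCA subrr addr0 rpredN dvdz_mull.
Qed.

Definition diag_seq_mx m n (d : seq int) : 'M[int]_(m, n) :=
  \matrix_(i, j) (d`_i *+ (i == j :> nat)).

Lemma diag_seq_mxE m n (d : seq int) (v : 'cV[int]_n) (i : 'I_m) :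
  (diag_seq_mx m n d *m v) i ord0 = \sum_(j < n | i == j :> nat) d`_i * v j ord0.
Proof.
rewrite mxE [RHS]big_mkcond /=; apply: eq_bigr => j _; rewrite mxE.
by case: eqP; rewrite ?mulr1n ?mulr0n ?mul0r.
Qed.

Lemma dvdz_col_diag_seq_mx q m n (d : seq int) (y : {ffun 'I_n -> 'I_q}) :
  dvdz_col q (diag_seq_mx m n d *m col_of_ffun y) =
  [forall j : 'I_n, (q%:Z %| (take (minn m n) d)`_j * (y j : nat)%:Z)%Z].
Proof.
have sum1 (i : nat) (j : 'I_n) (F : 'I_n -> int) :
    i = j -> \sum_(j' < n | i == j' :> nat) F j' = F j.
  by move=> ->; rewrite (big_pred1 j) // => j'; rewrite eq_sym.
apply/forallP/forallP => H j.
  have [j_lt_m | m_le_j] := ltnP j m; last first.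
    by rewrite nth_default ?mul0r ?dvdz0 // size_take_min !geq_min m_le_j.
  move: (H (Ordinal j_lt_m)); rewrite diag_seq_mxE (sum1 _ j) // mxE.
  by rewrite nth_take ?leq_min ?j_lt_m ?ltn_ord.
have [i_lt_n | n_le_i] := ltnP j n; last first.
  rewrite diag_seq_mxE big_pred0 ?dvdz0 // => i.
  by apply/eqP => ji; move: (ltn_ord i); rewrite -ji ltnNge n_le_i.
rewrite diag_seq_mxE (sum1 _ (Ordinal i_lt_n)) // mxE.
by move: (H (Ordinal i_lt_n)); rewrite nth_take // leq_min i_lt_n (ltn_ord j).
Qed.

(* Reduction mod q identifies (Z/qZ)^n with Z^n / qZ^n, on which the unimodular
   [R] acts bijectively, so the kernel of [L *m D *m R] mod q has the size of
   the kernel of the diagonal [D] mod q. *)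
Lemma card_kernel_mod_smith m n q (M : 'M[int]_(m, n)) (L : 'M[int]_m) (R : 'M[int]_n)
    (d : seq int) :
  L \in unitmx -> R \in unitmx -> M = L *m diag_seq_mx m n d *m R ->
  #|[set x : {ffun 'I_n -> 'I_q.+1} | dvdz_col q.+1 (M *m col_of_ffun x)]| =
  (\prod_(j < n) gcdn `|((take (minn m n) d)`_j)%R|%N q.+1)%N.
Proof.
move=> uL uR ME.
pose psi (x : {ffun 'I_n -> 'I_q.+1}) := ffun_of_col q (R *m col_of_ffun x).
have psiE x : dvdz_col q.+1 (M *m col_of_ffun x) =
              dvdz_col q.+1 (diag_seq_mx m n d *m col_of_ffun (psi x)).
  rewrite ME -!mulmxA dvdz_col_unitmx //; apply/esym/dvdz_col_congr.
  by rewrite -mulmxBr dvdz_col_mul ?col_of_ffunK.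
have psi_inj : injective psi.
  move=> x y psi_xy; apply: col_of_ffun_inj; rewrite -(dvdz_col_unitmx _ _ uR) mulmxBr.
  have -> : R *m col_of_ffun x - R *m col_of_ffun y =
      - (col_of_ffun (psi x) - R *m col_of_ffun x) + (col_of_ffun (psi y) - R *m col_of_ffun y).
    by rewrite psi_xy opprB addrA subrK.
  by rewrite dvdz_colD ?dvdz_colN ?col_of_ffunK.
transitivity #|psi @^-1: [set y | dvdz_col q.+1 (diag_seq_mx m n d *m col_of_ffun y)]|.
  by apply: eq_card => x; rewrite !inE psiE.
rewrite card_preimset //.
pose P (j : 'I_n) (t : 'I_q.+1) := (q.+1%:Z %| ((take (minn m n) d)`_j * (t : nat)%:Z)%R)%Z.
transitivity #|[set y : {ffun 'I_n -> 'I_q.+1} | [forall j, P j (y j)]]|.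
  by apply: eq_card => y; rewrite !inE dvdz_col_diag_seq_mx.
rewrite card_ffun_forall; apply: eq_bigr => j _; rewrite -card_ord_dvdn_mul //.
by apply: eq_card => t; rewrite unfold_in /= /P dvdzE abszM.
Qed.

Definition nonzero_norms (t : seq int) : seq nat := [seq `|x|%N | x <- t & x != 0].

Lemma path_dvdz0_nth (s : seq int) : path dvdz 0 s -> forall j, s`_j = 0.
Proof.
elim: s => [_ j|y s IHs /= /andP[y0 s_path]]; first by rewrite nth_nil.
have /eqP y_eq0 : y == 0 by rewrite -dvd0z.
by rewrite y_eq0 in s_path *; case=> //= j; apply: IHs.
Qed.

Lemma path_dvdz0_nonzero_norms (s : seq int) : path dvdz 0 s -> nonzero_norms s = [::].
Proof.
move=> /path_dvdz0_nth s0; rewrite /nonzero_norms.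
apply/eqP; rewrite -size_eq0 size_map size_filter -leqn0 leqNgt -has_count.
by apply/hasPn => y /(nthP 0) [j _ <-]; rewrite s0 eqxx.
Qed.

Lemma sorted_dvdz_nth_neq0 (t : seq int) : sorted dvdz t ->
  forall j, (t`_j != 0) = (j < size (nonzero_norms t))%N.
Proof.
elim: t => [|x t IHt] t_sorted j; first by rewrite nth_nil.
have [x0 | x_neq0] := eqVneq x 0.
  rewrite x0 /= in t_sorted *; rewrite /nonzero_norms /= -/(nonzero_norms t).
  rewrite path_dvdz0_nonzero_norms //.
  by case: j => [|j] /=; rewrite ?path_dvdz0_nth ?eqxx.
rewrite /nonzero_norms /= x_neq0 /=; case: j => [|j] //=.
by rewrite IHt ?(path_sorted t_sorted).
Qed.

Lemma prod_gcdn_sorted_dvdz (t : seq int) (n q : nat) :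
  sorted dvdz t -> (size t <= n)%N ->
  (\prod_(j < n) gcdn `|(t`_j)%R|%N q)%N =
  (q ^ (n - size (nonzero_norms t)) * \prod_(x <- nonzero_norms t) gcdn x q)%N.
Proof.
elim: t n => [|x t IHt] n t_sorted t_size.
  rewrite big_nil muln1 subn0 (eq_bigr (fun=> q)) ?prod_nat_const ?card_ord // => j _.
  by rewrite nth_nil gcd0n.
case: n t_size => // n t_size; rewrite big_ord_recl /=.
have [x0 | x_neq0] := eqVneq x 0.
  rewrite x0 /= in t_sorted *; rewrite /nonzero_norms /= -/(nonzero_norms t).
  rewrite path_dvdz0_nonzero_norms // big_nil muln1 subn0 gcd0n.
  rewrite (eq_bigr (fun=> q)) ?prod_nat_const ?card_ord ?expnS // => j _.
  by rewrite path_dvdz0_nth ?gcd0n.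
rewrite /nonzero_norms /= x_neq0 big_cons -/(nonzero_norms t) subSS.
by rewrite (IHt n (path_sorted t_sorted)) // mulnCA.
Qed.

Lemma path_dvdn_last (x : nat) s : path dvdn x s -> {in x :: s, forall d, d %| last x s}%N.
Proof.
elim: s x => [|y s IHs] x /=; first by move=> _ d; rewrite inE => /eqP ->.
case/andP=> xy ys d; rewrite inE => /predU1P[-> |]; last exact: IHs.
exact: dvdn_trans xy (IHs y ys y (mem_head _ _)).
Qed.

Lemma mxrank_mul_unitl (F : fieldType) m n (P : 'M[F]_m) (V : 'M[F]_(m, n)) :
  P \in unitmx -> \rank (P *m V) = \rank V.
Proof. by move=> uP; apply/eqmx_rank/eqmxMunitP; exists P. Qed.

Lemma mxrank_mul_unitr (F : fieldType) m n (P : 'M[F]_n) (V : 'M[F]_(m, n)) :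
  P \in unitmx -> \rank (V *m P) = \rank V.
Proof. by move=> uP; rewrite mxrankMfree // row_free_unit. Qed.

Lemma map_intr_unitmx n (L : 'M[int]_n) :
  L \in unitmx -> map_mx (intr : int -> rat) L \in unitmx.
Proof. by rewrite !unitmxE det_map_mx; apply: rmorph_unit. Qed.

(* Over Q the diagonal matrix factors as [pid_mx r] times an invertible
   diagonal matrix, [r] being the number of nonzero diagonal entries. *)
Lemma rank_diag_seq_mx m n (d : seq int) : sorted dvdz d ->
  \rank (map_mx (intr : int -> rat) (diag_seq_mx m n d)) =
  size (nonzero_norms (take (minn m n) d)).
Proof.
move=> d_sorted; set t := take (minn m n) d; set r := size (nonzero_norms t).
have t_sorted : sorted dvdz t by apply: take_sorted.
have r_le_t : (r <= size t)%N by rewrite /r /nonzero_norms size_map size_filter count_size.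
have t_le : (size t <= minn m n)%N by rewrite size_take_min geq_minl.
have r_le : (r <= minn m n)%N := leq_trans r_le_t t_le.
have r_lt j : (j < r)%N -> (j < minn m n)%N by move=> /leq_trans; apply.
have tE j : (j < minn m n)%N -> t`_j = d`_j by move=> j_lt; rewrite nth_take.
pose w : 'rV[rat]_n := \row_j (if (j < r)%N then (d`_j)%:~R else 1).
have -> : map_mx intr (diag_seq_mx m n d) = pid_mx r *m diag_mx w.
  apply/matrixP => i j; rewrite mul_mx_diag !mxE.
  have [ij | ij] := eqVneq (i : nat) j; last by rewrite mulr0n mul0r.
  rewrite mulr1n /= ij; case: ifP => j_lt_r; first by rewrite mul1r.
  have j_lt : (j < minn m n)%N by rewrite leq_min -{1}ij !ltn_ord.
  by rewrite mul0r -tE //; apply/eqP; rewrite intr_eq0; apply/negPn;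
     rewrite sorted_dvdz_nth_neq0 // j_lt_r.
rewrite mxrank_mul_unitr ?rank_pid_mx //.
- exact: leq_trans r_le (geq_minl _ _).
- exact: leq_trans r_le (geq_minr _ _).
- rewrite unitmxE det_diag unitfE; apply/prodf_neq0 => j _; rewrite mxE.
  case: ifP => j_lt_r; last exact: oner_neq0.
  by rewrite intr_eq0 -tE ?r_lt // sorted_dvdz_nth_neq0.
Qed.

Lemma card_set_int (T : finType) (C : pred T) :
  (#|[set x | C x]|)%:Z = \sum_x (C x)%:R.
Proof.
rewrite -sum1_card -natz natr_sum big_mkcond /=; apply: eq_bigr => x _.
by rewrite inE; case: (C x).
Qed.

Lemma prod_nat_bool (I : finType) (B : {pred I}) (b : I -> bool) :
  \prod_(i in B) ((b i)%:R : int) = ([forall i in B, b i])%:R.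
Proof.
case: forallP => [b_all | /forallP]; first by apply: big1 => i iB; rewrite (implyP (b_all i)).
rewrite negb_forall => /existsP[i]; rewrite negb_imply => /andP[iB /negbTE bi].
by rewrite (bigD1 i) //= bi mul0r.
Qed.

Lemma inclusion_exclusion (T I : finType) (P : I -> pred T) :
  (#|[set x | [forall i, ~~ P i x]]|)%:Z =
  \sum_(S : {set I}) (-1) ^+ #|S| * (#|[set x | [forall i in S, P i x]]|)%:Z.
Proof.
have indicatorE x : ([forall i, ~~ P i x])%:R =
    \sum_(S : {set I}) (-1) ^+ #|S| * ([forall i in S, P i x])%:R :> int.
  rewrite -(prod_nat_bool predT) /=.
  have notE (b : bool) : (~~ b)%:R = - b%:R + 1 :> int.
    by case: b; rewrite ?subrr ?oppr0 ?add0r.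
  under eq_bigr => i _ do rewrite notE.
  rewrite bigA_distr; apply: eq_bigr => S _.
  by rewrite -big_mkcond prodrN prod_nat_bool.
rewrite card_set_int (eq_bigr _ (fun x _ => indicatorE x)) exchange_big /=.
by apply: eq_bigr => S _; rewrite card_set_int mulr_sumr.
Qed.

Lemma smith_diagP m n (M : 'M[int]_(m, n)) : exists L R,
  [/\ L \in unitmx, R \in unitmx, sorted dvdz (smith_diag M) &
      M = L *m diag_seq_mx m n (smith_diag M) *m R].
Proof. by rewrite /smith_diag; case: int_Smith_normal_form => L uL [R uR [d]]; exists L, R. Qed.

Section CharacteristicQuasiPolynomial.

Variables (l : nat) (A : seq 'rV[int]_l).

Definition annihilates q (a : 'rV[int]_l) (x : {ffun 'I_l -> 'I_q}) :=
  (q%:Z %| \sum_(i < l) a 0 i * (x i : nat)%:Z)%Z.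

Definition kernel_count q (S : {set 'I_(size A)}) :=
  #|[set x : {ffun 'I_l -> 'I_q} | [forall i in S, annihilates (nth 0 A i) x]]|.

Lemma Mcount_incl_excl q :
  (Mcount A q)%:Z = \sum_(S : {set 'I_(size A)}) (-1) ^+ #|S| * (kernel_count q S)%:Z.
Proof.
rewrite -(inclusion_exclusion (fun i : 'I_(size A) => annihilates (nth 0 A i))) /Mcount.
congr Posz; apply: eq_card => x; rewrite !inE.
apply/(all_nthP 0)/forallP => [x_ok i | x_ok i iA]; first exact: x_ok.
exact: (x_ok (Ordinal iA)).
Qed.

Lemma rankS_smith_diag S :
  rankS A S = size (nonzero_norms (take (minn (size A) l) (smith_diag (subA A S)))).
Proof.
have [L [R [uL uR d_sorted ME]]] := smith_diagP (subA A S).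
rewrite /rankS [in LHS]ME !map_mxM mxrank_mul_unitr ?mxrank_mul_unitl ?map_intr_unitmx //.
exact: rank_diag_seq_mx.
Qed.

Lemma kernel_count_smith q S :
  kernel_count q.+1 S = (q.+1 ^ (l - rankS A S) * \prod_(d <- tor_inv A S) gcdn d q.+1)%N.
Proof.
have [L [R [uL uR d_sorted ME]]] := smith_diagP (subA A S).
rewrite rankS_smith_diag /kernel_count.
transitivity #|[set x : {ffun 'I_l -> 'I_q.+1} | dvdz_col q.+1 (subA A S *m col_of_ffun x)]|.
  apply: eq_card => x; rewrite !inE; apply: eq_forallb => i; rewrite mxE.
  under eq_bigr => j _ do rewrite !mxE.
  by case: (i \in S); rewrite //= big1 ?dvdz0 // => j _; rewrite mul0r.
rewrite (card_kernel_mod_smith q uL uR ME) prod_gcdn_sorted_dvdz ?take_sorted //.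
by rewrite size_take_min !geq_min leqnn orbT.
Qed.

Lemma mS_prod_gcdn S k : (0 < k)%N -> mS A S k = (\prod_(d <- tor_inv A S) gcdn d k)%N.
Proof.
move=> k_gt0; rewrite /mS (card_ffun_forall (fun i (t : 'I_k) => (k %| _ * t)%N)).
by rewrite (big_nth 0%N) big_mkord; apply: eq_bigr => i _; rewrite card_ord_dvdn_mul.
Qed.

Lemma sorted_tor_inv S : sorted dvdn (tor_inv A S).
Proof.
have [_ [_ [_ _ d_sorted _]]] := smith_diagP (subA A S).
rewrite sorted_map; apply: sorted_filter; first by move=> a b c; apply: dvdn_trans.
exact: take_sorted.
Qed.

Lemma tor_inv_dvd_rhoA S d : d \in tor_inv A S -> (d %| rhoA A)%N.
Proof.
move=> d_in; apply: (@dvdn_trans (last 1%N (tor_inv A S))); last exact: biglcmn_sup.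
by move: (sorted_tor_inv S) d_in; case: (tor_inv A S) => // d0 s /path_dvdn_last; apply.
Qed.

Lemma rhoA_gt0 : (0 < rhoA A)%N.
Proof.
apply: (big_ind (fun n => 0 < n)%N) => // [a b a_gt0 b_gt0 | S _].
  by rewrite lcmn_gt0 a_gt0.
have tor_gt0 d : d \in tor_inv A S -> (0 < d)%N.
  by case/mapP => x; rewrite mem_filter => /andP[x_neq0 _] ->; rewrite absz_gt0.
by case: (tor_inv A S) tor_gt0 => // d s tor_gt0; apply: tor_gt0; rewrite /= mem_last.
Qed.

Lemma Mcount_chiA k q : (0 < k)%N -> (0 < q)%N -> q = k %[mod rhoA A] ->
  (Mcount A q)%:Z = (chiA A k).[q%:Z].
Proof.
case: q => // q k_gt0 _ qk.
rewrite Mcount_incl_excl /chiA horner_sum; apply: eq_bigr => S _.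
rewrite hornerZ hornerXn kernel_count_smith mS_prod_gcdn //.
have -> : (\prod_(d <- tor_inv A S) gcdn d q.+1 = \prod_(d <- tor_inv A S) gcdn d k)%N.
  apply: eq_big_seq => d /tor_inv_dvd_rhoA d_rho.
  by rewrite -gcdn_modr -(modn_dvdm _ d_rho) qk (modn_dvdm _ d_rho) gcdn_modr.
rewrite PoszM -natz natrX -mulrA; congr (_ * _).
by rewrite mulrC !natz.
Qed.

End CharacteristicQuasiPolynomial.

Lemma poly_eq_on_progression (f g : {poly rat}) (k r : nat) : (0 < r)%N ->
  (forall j : nat, f.[(k + j * r)%:R] = g.[(k + j * r)%:R]) -> f = g.
Proof.
move=> r_gt0 fg; apply/eqP; rewrite -subr_eq0; apply/eqP.
pose qs := [seq (k + j * r)%:R : rat | j <- iota 0 (size (f - g))].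
apply: (@roots_geq_poly_eq0 _ _ qs); last by rewrite size_map size_iota.
  by apply/allP => _ /mapP[j _ ->]; rewrite /root !hornerE fg subrr.
rewrite map_inj_uniq ?iota_uniq // => i j /eqP; rewrite eqr_nat => /eqP.
by move/addnI/eqP; rewrite eqn_pmul2r // => /eqP.
Qed.

Theorem mainTheorem11 (l : nat) (A : seq 'rV[int]_l) (k : nat) :
  (0 < k)%N -> (k %| rhoA A)%N ->
  (forall q : nat, (0 < q)%N -> q = k %[mod rhoA A] ->
     ((Mcount A q)%:Z = (chiA A k).[q%:Z])%R) /\
  (forall f : {poly rat},
     (forall q : nat, (0 < q)%N -> q = k %[mod rhoA A] ->
        f.[q%:R] = (Mcount A q)%:R) ->
     f = map_poly (intr : int -> rat) (chiA A k))%R.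
Proof.
move=> k_gt0 _; split=> [q|f f_Mcount]; first exact: Mcount_chiA.
apply: (poly_eq_on_progression (k := k) (rhoA_gt0 A)) => j.
have qk : (k + j * rhoA A)%N = k %[mod rhoA A] by rewrite addnC modnMDl.
have q_gt0 : (0 < k + j * rhoA A)%N by rewrite addn_gt0 k_gt0.
rewrite f_Mcount // -[X in _ = _.[X]]/(intr (_ : nat)%:Z) horner_map /=.
by rewrite -Mcount_chiA.
Qed.
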